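(* Let $\gamma\in(0,1)$, $\lambda=0$, and assume $\widehat\Sigma$ is positive definite and $I-\gamma\widehat M^\pi$ is invertible. Define the (discounted) FQI-OPE estimator $\widehat v^\pi:=(\nu_0^\pi)^\top(I-\gamma\widehat M^\pi)^{-1}\widehat R$. For $f,g\in\mathcal Q$ define $$J(f,g):=\frac1N\sum_{n=1}^N\Big(\Big(f(s_n,a_n)-\gamma\int_{\mathcal A}f(s_n',a')\pi(a'\mid s_n')\,da'\Big)g(s_n,a_n)-\tfrac12 g(s_n,a_n)^2\Big)-\mathbb E\big[f(s_0,a_0)\mid s_0\sim\xi_0,a_0\sim\pi(\cdot\mid s_0)\big],$$ let $(f^*,g^* )$ be the solution of $\min_{f\in\mathcal Q}\max_{g\in\mathcal Q}J(f,g)$, and set $\widehat v^\pi_{\mathsf{DualDICE}}:=\frac1N\sum_{n=1}^N g^*(s_n,a_n)r_n'$. Then $\widehat v^\pi_{\mathsf{DualDICE}}=\widehat v^\pi$.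
   Context: $\mathcal X=\mathcal S\times\mathcal A$; $\pi$ is a target policy, $\xi_0$ an initial state distribution. $\phi:\mathcal X\to\mathbb R^d$ is a feature map, $\mathcal Q=\{\phi(\cdot)^\top w:w\in\mathbb R^d\}$, $\phi^\pi(s):=\int_{\mathcal A}\phi(s,a)\pi(a\mid s)\,da$. Data $\{(s_n,a_n,s_n',r_n')\}_{n=1}^N$. $\widehat\Sigma:=\lambda I+\sum_{n}\phi(s_n,a_n)\phi(s_n,a_n)^\top$, $\widehat R:=\widehat\Sigma^{-1}\sum_n r_n'\phi(s_n,a_n)$, $\widehat M^\pi:=\widehat\Sigma^{-1}\sum_n\phi(s_n,a_n)\phi^\pi(s_n')^\top$, $\nu_0^\pi:=\mathbb E[\phi(s,a)\mid s\sim\xi_0,a\sim\pi(\cdot\mid s)]$. *)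

From HB Require Import structures.
From mathcomp Require Import all_boot all_order all_algebra.
Set Implicit Arguments. Unset Strict Implicit. Unset Printing Implicit Defensive.
Import Order.TTheory GRing.Theory Num.Theory.
Local Open Scope ring_scope.

Section FQI.
Variables (R : realFieldType) (S A : Type) (d N : nat).
Variable phi : S -> A -> 'cV[R]_d.
(* phipi s = \int_A phi(s,a) pi(a|s) da *)
Variable phipi : S -> 'cV[R]_d.
(* nu0 = E[phi(s,a) | s ~ xi0, a ~ pi(.|s)] *)
Variable nu0 : 'cV[R]_d.
Variables (s : 'I_N -> S) (a : 'I_N -> A) (s' : 'I_N -> S) (r : 'I_N -> R).

Definition Sigma_hat (lam : R) : 'M[R]_d :=
  lam%:M + \sum_(n < N) phi (s n) (a n) *m (phi (s n) (a n))^T.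

Definition R_hat (lam : R) : 'cV[R]_d :=
  invmx (Sigma_hat lam) *m \sum_(n < N) r n *: phi (s n) (a n).

Definition M_hat (lam : R) : 'M[R]_d :=
  invmx (Sigma_hat lam) *m \sum_(n < N) phi (s n) (a n) *m (phipi (s' n))^T.

Definition v_hat (lam gamma : R) : R :=
  (nu0^T *m invmx (1%:M - gamma *: M_hat lam) *m R_hat lam) 0 0.

(* element of Q with weight w, evaluated at (x,y) *)
Definition qeval (w : 'cV[R]_d) (x : S) (y : A) : R := ((phi x y)^T *m w) 0 0.
(* \int_A f(x,a') pi(a'|x) da' for f = phi^T w (by linearity) *)
Definition qpi (w : 'cV[R]_d) (x : S) : R := ((phipi x)^T *m w) 0 0.
(* E[f(s0,a0) | s0 ~ xi0, a0 ~ pi] for f = phi^T w (by linearity) *)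
Definition qinit (w : 'cV[R]_d) : R := (nu0^T *m w) 0 0.

Definition J (gamma : R) (f g : 'cV[R]_d) : R :=
  (N%:R)^-1 * \sum_(n < N)
     ((qeval f (s n) (a n) - gamma * qpi f (s' n)) * qeval g (s n) (a n)
       - 2^-1 * qeval g (s n) (a n) ^+ 2)
  - qinit f.

(* (fs, gs) solves min_f max_g J(f,g): gs maximizes J(fs, .), and fs minimizes
   f |-> max_g J(f,g), i.e. for every f some g achieves J(f,g) >= J(fs,gs). *)
Definition minmax_solution (gamma : R) (fs gs : 'cV[R]_d) : Prop :=
  (forall g, J gamma fs g <= J gamma fs gs) /\
  (forall f, exists g, J gamma fs gs <= J gamma f g).

Definition v_dualdice (g : 'cV[R]_d) : R :=
  (N%:R)^-1 * \sum_(n < N) qeval g (s n) (a n) * r n.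

End FQI.

Definition posdef (R : realFieldType) (d : nat) (M : 'M[R]_d) : Prop :=
  forall x : 'cV[R]_d, x != 0 -> 0 < (x^T *m M *m x) 0 0.

(** The payoff J(f, g) is a concave quadratic in g; writing
    A := sum_n phi_n (phi_n - gamma phipi'_n)^T and Sigma := sum_n phi_n phi_n^T,
    its maximiser is g = Sigma^-1 A f.  The saddle conditions therefore force g*
    to be this best response, and f* to minimise f |-> max_g J(f, g), whose
    first-order condition reads (1/N) A^T g* = nu0.  Since A = Sigma (I - gamma M),
    (1/N) g*^T Sigma R = nu0^T (I - gamma M)^-1 R, which is the FQI estimate. *)

From HB Require Import structures.
From mathcomp Require Import all_boot all_order all_algebra ring lra.
Import Order.TTheory GRing.Theory Num.Theory.
Local Open Scope ring_scope.
Set Implicit Arguments. Unset Strict Implicit. Unset Printing Implicit Defensive.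

Section Dot.
Variables (R : comPzRingType) (d : nat).
Implicit Types (u v w : 'cV[R]_d) (M : 'M[R]_d).

Definition dot u v : R := (u^T *m v) 0 0.

Lemma dotC u v : dot u v = dot v u.
Proof. by rewrite /dot !mxE; apply: eq_bigr => i _; rewrite !mxE mulrC. Qed.

Lemma dotDr u v w : dot u (v + w) = dot u v + dot u w.
Proof. by rewrite /dot mulmxDr mxE. Qed.

Lemma dotZr u v c : dot u (c *: v) = c * dot u v.
Proof. by rewrite /dot -scalemxAr mxE. Qed.

Lemma dotBr u v w : dot u (v - w) = dot u v - dot u w.
Proof. by rewrite -scaleN1r dotDr dotZr mulN1r. Qed.

Lemma dotDl u v w : dot (v + w) u = dot v u + dot w u.
Proof. by rewrite !(dotC _ u) dotDr. Qed.

Lemma dotZl u v c : dot (c *: v) u = c * dot v u.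
Proof. by rewrite !(dotC _ u) dotZr. Qed.

Lemma dotBl u v w : dot (v - w) u = dot v u - dot w u.
Proof. by rewrite !(dotC _ u) dotBr. Qed.

Lemma dot0r u : dot u 0 = 0.
Proof. by rewrite /dot mulmx0 mxE. Qed.

Lemma dot_sumr n u (F : 'I_n -> 'cV[R]_d) :
  dot u (\sum_(i < n) F i) = \sum_(i < n) dot u (F i).
Proof. by rewrite /dot mulmx_sumr summxE. Qed.

Lemma dot_mulmxl M u v : dot (M *m u) v = dot u (M^T *m v).
Proof. by rewrite /dot trmx_mul mulmxA. Qed.

Lemma dot_outer u v x y : dot u ((x *m y^T) *m v) = dot u x * dot y v.
Proof. by rewrite -mulmxA (mx11_scalar (y^T *m v)) mul_mx_scalar dotZr mulrC. Qed.

End Dot.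

Lemma posdef_unitmx (R : realFieldType) d (M : 'M[R]_d) : posdef M -> M \in unitmx.
Proof.
move=> M_pd; rewrite -row_free_unit -kermx_eq0; apply/eqP/row_matrixP => i.
rewrite row0; set v := row i (kermx M).
have vM0 : v *m M = 0 by rewrite /v -row_mul mulmx_ker row0.
apply: trmx_inj; rewrite trmx0; apply/eqP/negPn/negP => /M_pd.
by rewrite trmxK vM0 mul0mx mxE ltxx.
Qed.

Lemma linear_coef_eq0 (R : realFieldType) (al be : R) :
  (forall t, 0 <= al * t + be * t ^+ 2) -> al = 0.
Proof.
move=> quad_ge0; apply/eqP/negP => /negP al_neq0.
(* At t = - al / c with c > be the quadratic equals (be - c) (al / c)^2 < 0. *)
pose c := `|be| + 1; pose u := al / c.
have c_gt0 : 0 < c by rewrite ltr_pwDr // normr_ge0.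
have be_lt_c : be < c by rewrite (le_lt_trans (ler_norm be)) // ltrDl.
have alE : al = u * c by rewrite /u divfK // gt_eqF.
have u2_gt0 : 0 < u ^+ 2 by rewrite exprn_even_gt0 // mulf_neq0 // invr_eq0 gt_eqF.
have := quad_ge0 (- u); rewrite alE; nra.
Qed.

Section QuadraticSaddle.
Variables (R : realFieldType) (d : nat) (Sig A : 'M[R]_d) (nu : 'cV[R]_d) (c : R).
Hypotheses (Sig_sym : Sig^T = Sig) (Sig_pd : posdef Sig) (c_gt0 : 0 < c).
Implicit Types (e f g : 'cV[R]_d).

Definition payoff f g : R := c * (dot (A *m f) g - 2^-1 * dot g (Sig *m g)) - dot nu f.

Definition saddle_point f g :=
  (forall g', payoff f g' <= payoff f g) /\ (forall f', exists g', payoff f g <= payoff f' g').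

Definition best_response f := invmx Sig *m (A *m f).

Lemma dot_Sig_sym u v : dot u (Sig *m v) = dot v (Sig *m u).
Proof. by rewrite dotC dot_mulmxl Sig_sym. Qed.

Lemma dot_Sig_gt0 w : w != 0 -> 0 < dot w (Sig *m w).
Proof. by move/Sig_pd; rewrite /dot mulmxA. Qed.

Lemma dot_Sig_ge0 w : 0 <= dot w (Sig *m w).
Proof.
by have [->|/dot_Sig_gt0/ltW //] := eqVneq w 0; rewrite mulmx0 dot0r.
Qed.

Lemma dot_best_response f g : dot (A *m f) g = dot (best_response f) (Sig *m g).
Proof.
by rewrite dot_Sig_sym dotC /best_response mulKVmx // posdef_unitmx.
Qed.

Lemma best_responseD f e t :
  best_response (f + t *: e) = best_response f + t *: best_response e.
Proof. by rewrite /best_response !mulmxDr -!scalemxAr. Qed.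

Lemma payoff_best_response_sub f g :
  payoff f (best_response f) - payoff f g =
  c * 2^-1 * dot (g - best_response f) (Sig *m (g - best_response f)).
Proof.
rewrite /payoff !dot_best_response mulmxBr !dotBl !dotBr.
rewrite [dot g (Sig *m best_response f)]dot_Sig_sym; by field.
Qed.

Lemma payoff_le_best_response f g : payoff f g <= payoff f (best_response f).
Proof.
by rewrite -subr_ge0 payoff_best_response_sub mulr_ge0 ?dot_Sig_ge0 ?divr_ge0 ?ltW.
Qed.

Lemma argmax_payoff f g :
  (forall g', payoff f g' <= payoff f g) -> g = best_response f.
Proof.
move=> g_max; apply/eqP; rewrite -subr_eq0; apply/negP => /negP/dot_Sig_gt0 Q_gt0.
have := g_max (best_response f); rewrite -subr_ge0 -opprB payoff_best_response_sub.
by rewrite oppr_ge0 leNgt mulr_gt0 ?divr_gt0.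
Qed.

Lemma payoff_best_response f :
  payoff f (best_response f) =
  c * 2^-1 * dot (best_response f) (Sig *m best_response f) - dot nu f.
Proof. by rewrite /payoff dot_best_response; field. Qed.

Lemma saddle_point_min f g : saddle_point f g ->
  forall f', payoff f g <= payoff f' (best_response f').
Proof.
move=> [_ f_min] f'; have [g' fg_le] := f_min f'.
exact: le_trans fg_le (payoff_le_best_response _ _).
Qed.

(* Along f + t e the value of the game changes by a quadratic in t whose linear
   coefficient is the directional derivative; minimality forces it to vanish. *)
Lemma saddle_point_stationary f g : saddle_point f g ->
  forall e, c * dot (A *m e) g = dot nu e.
Proof.
move=> fg_saddle e; have gE := argmax_payoff fg_saddle.1.
apply/eqP; rewrite -subr_eq0; apply/eqP.
apply: (@linear_coef_eq0 _ _
  (c * 2^-1 * dot (best_response e) (Sig *m best_response e))) => t.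
have := saddle_point_min fg_saddle (f + t *: e).
rewrite -subr_ge0 gE !payoff_best_response best_responseD -gE.
rewrite mulmxDr -scalemxAr !dotDl !dotZl !dotDr !dotZr.
rewrite [dot g (Sig *m best_response e)]dot_Sig_sym -dot_best_response; lra.
Qed.

End QuadraticSaddle.

Section DualDICE.
Variables (R : realFieldType) (S A : Type) (d N : nat).
Variables (phi : S -> A -> 'cV[R]_d) (phipi : S -> 'cV[R]_d) (nu0 : 'cV[R]_d).
Variables (s : 'I_N -> S) (a : 'I_N -> A) (s' : 'I_N -> S) (r : 'I_N -> R).
Variable gamma : R.

Local Notation phi_ n := (phi (s n) (a n)).
Local Notation Sig := (Sigma_hat phi s a 0).

Definition lstd_mx : 'M[R]_d :=
  \sum_(n < N) phi_ n *m (phi_ n - gamma *: phipi (s' n))^T.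

Definition reward_moment : 'cV[R]_d := \sum_(n < N) r n *: phi_ n.

Lemma Sigma_hat_sym lam : (Sigma_hat phi s a lam)^T = Sigma_hat phi s a lam.
Proof.
rewrite /Sigma_hat linearD linear_sum /= tr_scalar_mx; congr (_ + _).
by apply: eq_bigr => n _; rewrite trmx_mul trmxK.
Qed.

Lemma lstd_mxE : Sig \in unitmx ->
  lstd_mx = Sig *m (1%:M - gamma *: M_hat phi phipi s a s' 0).
Proof.
move=> Sig_unit; rewrite mulmxBr mulmx1 -scalemxAr /M_hat mulmxA mulmxV // mul1mx.
rewrite /lstd_mx /Sigma_hat raddf0 add0r scaler_sumr -sumrB.
by apply: eq_bigr => n _; rewrite linearB linearZ /= mulmxBr scalemxAr.
Qed.

Lemma J_payoff f g :
  J phi phipi nu0 s a s' gamma f g = payoff Sig lstd_mx nu0 N%:R^-1 f g.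
Proof.
rewrite /J /payoff /qinit -/(dot nu0 f); congr (_ * _ - _).
rewrite dot_mulmxl /lstd_mx /Sigma_hat raddf0 add0r linear_sum /=.
rewrite !mulmx_suml !dot_sumr mulr_sumr -sumrB; apply: eq_bigr => n _.
rewrite trmx_mul trmxK !dot_outer /qeval /qpi -!/(dot _ _).
by rewrite dotBr dotZr (dotC g) !(dotC f); ring.
Qed.

Lemma minmax_solution_saddle fs gs :
  minmax_solution phi phipi nu0 s a s' gamma fs gs ->
  saddle_point Sig lstd_mx nu0 N%:R^-1 fs gs.
Proof.
move=> [gs_max fs_min]; split=> [g | f]; first by rewrite -!J_payoff.
by have [g fg_le] := fs_min f; exists g; rewrite -!J_payoff.
Qed.

Lemma v_dualdiceE g : v_dualdice phi s a r g = N%:R^-1 * dot g reward_moment.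
Proof.
rewrite /v_dualdice /reward_moment dot_sumr; congr (_ * _); apply: eq_bigr => n _.
by rewrite dotZr mulrC dotC.
Qed.

Lemma v_hatE : v_hat phi phipi nu0 s a s' r 0 gamma =
  dot nu0 (invmx (1%:M - gamma *: M_hat phi phipi s a s' 0) *m (invmx Sig *m reward_moment)).
Proof. by rewrite /v_hat /R_hat -!mulmxA. Qed.

End DualDICE.

Theorem theorem6 (R : realFieldType) (S A : Type) (d N : nat)
  (phi : S -> A -> 'cV[R]_d) (phipi : S -> 'cV[R]_d) (nu0 : 'cV[R]_d)
  (s : 'I_N -> S) (a : 'I_N -> A) (s' : 'I_N -> S) (r : 'I_N -> R)
  (gamma : R) (fs gs : 'cV[R]_d) :
  0 < gamma < 1 ->
  posdef (Sigma_hat phi s a 0) ->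
  (1%:M - gamma *: M_hat phi phipi s a s' 0) \in unitmx ->
  minmax_solution phi phipi nu0 s a s' gamma fs gs ->
  v_dualdice phi s a r gs = v_hat phi phipi nu0 s a s' r 0 gamma.
Proof.
move=> _ Sig_pd U_unit /minmax_solution_saddle fg_saddle.
have [N0 | N_gt0] := posnP N.
  by subst N; rewrite v_dualdiceE v_hatE /reward_moment big_ord0 !mulmx0 !dot0r mulr0.
have c_gt0 : 0 < N%:R^-1 :> R by rewrite invr_gt0 ltr0n.
have stationary := saddle_point_stationary (Sigma_hat_sym _ _ _ _) Sig_pd c_gt0 fg_saddle.
rewrite v_dualdiceE v_hatE -stationary lstd_mxE ?posdef_unitmx //.
by rewrite -mulmxA mulKVmx // mulKVmx ?posdef_unitmx // dotC.
Qed.
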